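(* Fix a binary instance $(\mu_0,\hat q)$. There is a constant $C<\infty$, depending only on $(\mu_0,\hat q)$, such that for every $T\ge 4$ and every bias $\alpha^\star\in(0,1]$, the Safe Exploration policy satisfies $\mathrm{Reg}_T(\mathrm{SE};\alpha^\star)\le C\log\log T$. In particular one may take any $C$ proportional to $2\frac{(1-\mu_0)^2}{(\hat q-\mu_0)\hat q}+1$, times an absolute constant.
   Context: Binary model: states $\Omega=\{0,1\}$, actions $A=\{0,1\}$, prior $\mu_0=\Pr(\omega=1)\in(0,1)$, cutoff $\hat q\in(\mu_0,1)$, sender utility $u_S(a,\omega)=\mathbf 1\{a=1\}$. A receiver with fixed unknown bias $\alpha^\star\in(0,1]$ takes action $1$ after Bayesian posterior $\nu=\Pr(\omega=1\mid s)$ iff $(1-\alpha^\star)\mu_0+\alpha^\star\nu\ge\hat q$. Define $\nu_B(\alpha)=\mu_0+(\hat q-\mu_0)/\alpha$ and $\alpha_{\min}=(\hat q-\mu_0)/(1-\mu_0)$. For $\alpha\in[\alpha_{\min},1]$, let $\tau(\alpha)$ be the Bayes-plausible scheme with mass $1-\mu_0/\nu_B(\alpha)$ on posterior $0$ and mass $\mu_0/\nu_B(\alpha)$ on posterior $\nu_B(\alpha)$. Repeated interaction over $T$ rounds. In each round the sender commits to a Bayes-plausible posterior distribution, a state $\omega_t\sim\mu_0$ and posterior $\nu_t$ are realized, the receiver acts, and the sender observes $\nu_t$ and the action. Let $\mathrm{OPT}(\alpha^\star)$ be the supremum over Bayes-plausible distributions of the probability of action $1$. The regret is $\mathrm{Reg}_T=T\cdot\mathrm{OPT}(\alpha^\star)-\sum_t\mathbb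 E[\Pr(\text{action }1\text{ in round }t\mid\text{history})]$. Safe Exploration (SE) policy: initialize $\underline\alpha=\alpha_{\min}$, $\overline\alpha=1$, $\epsilon=1/2$. While $\overline\alpha-\underline\alpha>1/T$ and rounds remain, run a phase: 1. Set $m_{\rm prev}=\underline\alpha$ and $m=\underline\alpha+\epsilon$. 2. While $m\le\overline\alpha$ and rounds remain, play $\tau(m)$ for one round. If the realized posterior is nonzero: - if the receiver plays action $1$, set $m_{\rm prev}\gets m$ and $m\gets m+\epsilon$; - otherwise set $(\underline\alpha,\overline\alpha)\gets(m_{\rm prev},m)$, $\epsilon\gets\epsilon^2$, and end the phase. 3. If the inner loop ended because $m>\overline\alpha$, set $(\underline\alpha,\overline\alpha)\gets(m_{\rm prev},\overline\alpha)$ and $\epsilon\gets\epsilon^2$. After exploration ends, play $\tau(\underline\alpha)$ in all remaining rounds. *)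

From Stdlib Require Import Reals Lra List.
From Coquelicot Require Import Coquelicot.
Import ListNotations.
Open Scope R_scope.

(** Binary persuasion instance: prior mu0 = Pr(omega = 1), cutoff qh. *)

(* Receiver with bias a takes action 1 at Bayesian posterior nu iff
   (1-a) mu0 + a nu >= qh. *)
Definition acts (mu0 qh a nu : R) : bool :=
  if Rle_dec qh ((1 - a) * mu0 + a * nu) then true else false.

Definition ind (b : bool) : R := if b then 1 else 0.

Definition nuB (mu0 qh a : R) : R := mu0 + (qh - mu0) / a.
Definition alpha_min (mu0 qh : R) : R := (qh - mu0) / (1 - mu0).

(** Finitely supported posterior distributions: list of (weight, posterior). *)
Definition bayes_plausible (mu0 : R) (D : list (R * R)) : Prop :=
  List.Forall (fun wn => 0 <= fst wn /\ 0 <= snd wn <= 1) D /\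
  fold_right Rplus 0 (map fst D) = 1 /\
  fold_right Rplus 0 (map (fun wn => fst wn * snd wn) D) = mu0.

Definition prob_act1 (mu0 qh a : R) (D : list (R * R)) : R :=
  fold_right Rplus 0 (map (fun wn => fst wn * ind (acts mu0 qh a (snd wn))) D).

Definition OPT (mu0 qh a : R) : R :=
  real (Lub_Rbar (fun x => exists D, bayes_plausible mu0 D /\ x = prob_act1 mu0 qh a D)).

Definition tau (mu0 qh alpha : R) : list (R * R) :=
  [(1 - mu0 / nuB mu0 qh alpha, 0); (mu0 / nuB mu0 qh alpha, nuB mu0 qh alpha)].

(** State of the Safe Exploration policy at the beginning of a round. *)
Inductive se_state : Type :=
  (* inside a phase, about to play tau(m); fields lo hi eps mprev m *)
  | Explore (lo hi eps mprev m : R)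
  (* exploration over: play tau(lo) forever *)
  | Exploit (lo : R).

(* Start of the outer loop (no round consumed): check the outer condition,
   start a phase; if the phase is empty (lo + eps > hi) apply step 3
   ((lo,hi) <- (mprev,hi) = (lo,hi), eps <- eps^2) and loop again.
   The fuel is never exhausted when fuel >= T. *)
Fixpoint phase_start (T : nat) (fuel : nat) (lo hi eps : R) : se_state :=
  match fuel with
  | O => Exploit lo
  | S f =>
      if Rle_dec (hi - lo) (/ INR T) then Exploit lo
      else if Rle_dec (lo + eps) hi then Explore lo hi eps lo (lo + eps)
      else phase_start T f lo hi (eps * eps)
  end.

Definition se_init (mu0 qh : R) (T : nat) : se_state :=
  phase_start T (S T) (alpha_min mu0 qh) 1 (/ 2).

(* Transition after a round played in state Explore, given whether the
   realized posterior is nonzero (b) and the receiver's true bias astar. *)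
Definition se_next (mu0 qh astar : R) (T : nat) (lo hi eps mprev m : R)
  (b : bool) : se_state :=
  if b then
    if acts mu0 qh astar (nuB mu0 qh m) then
      if Rle_dec (m + eps) hi then Explore lo hi eps m (m + eps)
      else (* inner loop ends because m > hi: step 3 *)
        phase_start T (S T) m hi (eps * eps)
    else (* action 0: (lo,hi) <- (mprev, m), eps <- eps^2, end phase *)
      phase_start T (S T) mprev m (eps * eps)
  else Explore lo hi eps mprev m.

(* Expected total of Pr(action 1 in round | history) over the n remaining
   rounds, starting from state s (backward recursion over the random
   realized posteriors). *)
Fixpoint se_value (mu0 qh astar : R) (T : nat) (n : nat) (s : se_state) : R :=
  match n with
  | O => 0
  | S k =>
      match s with
      | Exploit lo =>
          prob_act1 mu0 qh astar (tau mu0 qh lo)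
          + se_value mu0 qh astar T k (Exploit lo)
      | Explore lo hi eps mprev m =>
          let p := mu0 / nuB mu0 qh m in
          prob_act1 mu0 qh astar (tau mu0 qh m)
          + p * se_value mu0 qh astar T k (se_next mu0 qh astar T lo hi eps mprev m true)
          + (1 - p) * se_value mu0 qh astar T k (se_next mu0 qh astar T lo hi eps mprev m false)
      end
  end.

Definition regret_SE (mu0 qh astar : R) (T : nat) : R :=
  INR T * OPT mu0 qh astar - se_value mu0 qh astar T T (se_init mu0 qh T).

(* The regret is controlled by a potential function.  Playing tau(m) loses
   high_mass a - high_mass m per round (a the true bias), but the state only
   moves when the posterior is nonzero, which happens with probability
   high_mass m; since high_mass a - high_mass m <= high_mass m * kappa (a - m),
   the loss is paid by the expected drop of the quadratic potential
   kappa (a - m + eps)^2 / (2 eps) when the probe m <= a is accepted, and the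
   single rejected probe of a phase costs at most 1.  A phase of step eps ends
   with an interval of length at most eps, so the next phase, of step eps^2,
   starts with potential at most kappa.  As eps runs through 2^-1, 2^-2, 2^-4,
   ..., after O(log log T) phases the interval is shorter than 1/T, and each
   exploitation round then loses at most kappa / T.  Hence the regret is at
   most kappa + (kappa + 1) times the number of phases. *)

From Stdlib Require Import Reals Lra Lia List.
From Coquelicot Require Import Coquelicot.
Open Scope R_scope.

Lemma real_Lub_Rbar_le (E : R -> Prop) b :
  0 <= b -> (forall x, E x -> x <= b) -> real (Lub_Rbar E) <= b.
Proof.
  intros Hb HE. destruct (Lub_Rbar_correct E) as [_ Hlub].
  assert (Hle : Rbar_le (Lub_Rbar E) (Finite b)) by (apply Hlub; intros x Hx; apply HE, Hx).
  destruct (Lub_Rbar E); simpl in *; easy.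
Qed.

Lemma ln_inv_pos e : 0 < e < 1 -> 0 < ln (/ e).
Proof.
  intros He. rewrite <- ln_1. apply ln_increasing; [lra|].
  rewrite <- Rinv_1. apply Rinv_lt_contravar; lra.
Qed.

Lemma ln_le_sub1 x : 0 < x -> ln x <= x - 1.
Proof. intros Hx. pose proof (exp_ineq1_le (ln x)). rewrite exp_ln in *; lra. Qed.

Lemma exp_le_inv_1m x : x < 1 -> exp x <= / (1 - x).
Proof.
  intros Hx. pose proof (exp_ineq1_le (- x)).
  rewrite <- (Rinv_inv (exp x)), <- exp_Ropp. apply Rinv_le_contravar; lra.
Qed.

Lemma ln2_ge_3_5 : 3 / 5 <= ln 2.
Proof.
  rewrite <- (ln_exp (3 / 5)). left. apply ln_increasing; [apply exp_pos|].
  replace (3 / 5) with (1 / 5 + 1 / 5 + 1 / 5) by field. rewrite !exp_plus.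
  pose proof (exp_le_inv_1m (1 / 5) ltac:(lra)). pose proof (exp_pos (1 / 5)).
  set (z := exp (1 / 5)) in *. replace (/ (1 - 1 / 5)) with (5 / 4) in * by field.
  assert (z * z <= 25 / 16) by nra. nra.
Qed.

Lemma INR_le_pow2 n : INR n <= 2 ^ n.
Proof.
  induction n as [|n IH]; [simpl; lra|].
  rewrite S_INR. simpl pow. pose proof (pow_R1_Rle 2 n ltac:(lra)). lra.
Qed.

Lemma pow_pow2_le_inv_INR e T : (1 <= T)%nat -> 0 < e <= 1 / 2 -> e ^ (2 ^ T) <= / INR T.
Proof.
  intros HT He. assert (H1 : 1 <= INR T) by (apply (le_INR 1); exact HT).
  apply Rle_trans with ((/ 2) ^ (2 ^ T)); [apply pow_incr; lra|].
  rewrite pow_inv. apply Rinv_le_contravar; [lra|].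
  assert (HT2 : INR T <= INR (2 ^ T)) by (rewrite pow_INR; simpl INR;
    replace (1 + 1) with 2 by ring; apply INR_le_pow2).
  pose proof (INR_le_pow2 (2 ^ T)). lra.
Qed.

Lemma phase_start_S T f lo hi e : phase_start T (S f) lo hi e =
  if Rle_dec (hi - lo) (/ INR T) then Exploit lo
  else if Rle_dec (lo + e) hi then Explore lo hi e lo (lo + e)
  else phase_start T f lo hi (e * e).
Proof. reflexivity. Qed.

Lemma se_value_Exploit mu0 qh a T n lo :
  se_value mu0 qh a T n (Exploit lo) = INR n * prob_act1 mu0 qh a (tau mu0 qh lo).
Proof. induction n as [|n IH]; [simpl; ring|]. cbn [se_value]. rewrite IH, S_INR. ring. Qed.

(* [depth T e] is the base-2 logarithm of [ln (2 T^2) / ln (1/e)]: the number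
   of squarings that bring [e] down to [1 / (2 T^2)]. *)
Definition depth (T : nat) (e : R) : R :=
  (ln (ln (2 * INR T ^ 2)) - ln (ln (/ e))) / ln 2.

Lemma depth_sq T e : 0 < e < 1 -> depth T (e * e) = depth T e - 1.
Proof.
  intros He. unfold depth. pose proof (ln_inv_pos e He). pose proof ln_lt_2.
  assert (0 < / e) by (apply Rinv_0_lt_compat; lra).
  rewrite Rinv_mult, (ln_mult (/ e) (/ e)) by lra.
  replace (ln (/ e) + ln (/ e)) with (2 * ln (/ e)) by ring.
  rewrite (ln_mult 2 (ln (/ e))) by lra. field. lra.
Qed.

Lemma depth_pos T e : (1 <= T)%nat -> 0 < e <= 1 / 2 -> / (2 * INR T ^ 2) < e -> 0 < depth T e.
Proof.
  intros HT He Hlow. unfold depth. pose proof ln_lt_2.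
  assert (H1 : 1 <= INR T) by (apply (le_INR 1); exact HT).
  assert (Hinv : / e < 2 * INR T ^ 2).
  { rewrite <- (Rinv_inv (2 * INR T ^ 2)).
    apply Rinv_lt_contravar; [apply Rmult_lt_0_compat; [apply Rinv_0_lt_compat; nra|lra] | exact Hlow]. }
  pose proof (ln_inv_pos e ltac:(lra)).
  apply Rdiv_lt_0_compat; [|lra].
  apply Rlt_0_minus, ln_increasing; [lra|].
  apply ln_increasing; [apply Rinv_0_lt_compat; lra | exact Hinv].
Qed.

Lemma ln_INR_ge T : (4 <= T)%nat -> 6 / 5 <= ln (INR T).
Proof.
  intros HT. assert (H4 : 4 <= INR T) by (apply (le_INR 4) in HT; simpl in HT; lra).
  pose proof ln2_ge_3_5.
  enough (ln (2 * 2) <= ln (INR T)) by (rewrite ln_mult in *; lra).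
  apply ln_le; lra.
Qed.

Lemma ln_ln_INR_ge T : (4 <= T)%nat -> 1 / 6 <= ln (ln (INR T)).
Proof.
  intros HT. pose proof (ln_INR_ge T HT).
  pose proof (ln_le_sub1 (/ ln (INR T)) ltac:(apply Rinv_0_lt_compat; lra)).
  rewrite ln_Rinv in * by lra.
  assert (/ ln (INR T) <= / (6 / 5)) by (apply Rinv_le_contravar; lra). lra.
Qed.

Lemma depth_half_le T : (4 <= T)%nat -> depth T (/ 2) + 1 <= 6 + 2 * ln (ln (INR T)).
Proof.
  intros HT. assert (H4 : 4 <= INR T) by (apply (le_INR 4) in HT; simpl in HT; lra).
  pose proof ln2_ge_3_5. pose proof (ln_ln_INR_ge T HT).
  assert (HL : ln 2 <= ln (INR T)) by (apply ln_le; lra).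
  unfold depth. rewrite Rinv_inv. set (L := ln (INR T)) in *.
  assert (E1 : ln (2 * INR T ^ 2) = ln 2 + 2 * L).
  { rewrite ln_mult, ln_pow by (try lra; apply pow_lt; lra). simpl INR. unfold L. ring. }
  assert (E2 : ln (ln 2 + 2 * L) <= ln 3 + ln L).
  { rewrite <- ln_mult by lra. apply ln_le; lra. }
  pose proof (ln_le_sub1 3 ltac:(lra)).
  assert (E3 : - ln (ln 2) <= 2 / 3).
  { rewrite <- ln_Rinv by lra. pose proof (ln_le_sub1 (/ ln 2) ltac:(apply Rinv_0_lt_compat; lra)).
    assert (/ ln 2 <= / (3 / 5)) by (apply Rinv_le_contravar; lra). lra. }
  rewrite E1. set (u := ln L) in *.
  assert ((ln (ln 2 + 2 * L) - ln (ln 2)) / ln 2 <= (3 + u) / (3 / 5)); [|lra].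
  apply Rle_trans with ((3 + u) / ln 2); unfold Rdiv.
  - apply Rmult_le_compat_r; [left; apply Rinv_0_lt_compat|]; lra.
  - apply Rmult_le_compat_l; [|apply Rinv_le_contravar]; lra.
Qed.

Section Instance.

Variables mu0 qh : R.
Hypothesis mu0_pos : 0 < mu0.
Hypothesis mu0_lt_qh : mu0 < qh.
Hypothesis qh_lt_1 : qh < 1.

Definition high_mass (m : R) : R := mu0 / nuB mu0 qh m.

(* Relative Lipschitz constant of [high_mass] on [alpha_min, 1]. *)
Definition kappa : R := (1 - mu0) ^ 2 / ((qh - mu0) * qh).

Lemma kappa_pos : 0 < kappa.
Proof. unfold kappa. apply Rdiv_lt_0_compat; [apply pow_lt | apply Rmult_lt_0_compat]; lra. Qed.

Lemma alpha_min_pos : 0 < alpha_min mu0 qh.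
Proof. unfold alpha_min. apply Rdiv_lt_0_compat; lra. Qed.

Lemma alpha_min_le1 : alpha_min mu0 qh <= 1.
Proof. unfold alpha_min. apply Rcomplements.Rle_div_l; lra. Qed.

Lemma nuB_gt_mu0 m : 0 < m -> mu0 < nuB mu0 qh m.
Proof. intros Hm. unfold nuB. pose proof (Rdiv_lt_0_compat (qh - mu0) m ltac:(lra) Hm). lra. Qed.

Lemma nuB_gt1 a : 0 < a -> a < alpha_min mu0 qh -> 1 < nuB mu0 qh a.
Proof.
  unfold alpha_min, nuB. intros Ha Hlt.
  apply Rcomplements.Rlt_div_r in Hlt; [|lra].
  enough (1 - mu0 < (qh - mu0) / a) by lra.
  apply Rcomplements.Rlt_div_r; lra.
Qed.

Lemma acts_ge_nuB a nu : 0 < a -> acts mu0 qh a nu = true -> nuB mu0 qh a <= nu.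
Proof.
  unfold acts, nuB. intros Ha. destruct (Rle_dec _ _) as [Hle|]; [intros _|discriminate].
  enough ((qh - mu0) / a <= nu - mu0) by lra.
  apply Rcomplements.Rle_div_l; lra.
Qed.

Lemma acts_nuB a m : 0 < a -> 0 < m -> acts mu0 qh a (nuB mu0 qh m) = true <-> m <= a.
Proof.
  intros Ha Hm. unfold acts, nuB.
  assert (Hk : (qh - mu0) / m * m = qh - mu0) by (field; lra).
  assert (0 < (qh - mu0) / m) by (apply Rdiv_lt_0_compat; lra).
  destruct (Rle_dec _ _) as [Hle|Hnle]; split; intros Hyp; try easy.
  - nra.
  - exfalso. apply Hnle. nra.
Qed.

Lemma acts_0 a : 0 < a -> acts mu0 qh a 0 = false.
Proof. intros Ha. unfold acts. destruct (Rle_dec _ _); [nra|easy]. Qed.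

Lemma high_mass_pos m : 0 < m -> 0 < high_mass m.
Proof. intros Hm. pose proof (nuB_gt_mu0 m Hm). apply Rdiv_lt_0_compat; lra. Qed.

Lemma high_mass_le1 m : 0 < m -> high_mass m <= 1.
Proof. intros Hm. pose proof (nuB_gt_mu0 m Hm). apply Rcomplements.Rle_div_l; lra. Qed.

Lemma high_mass_eq m : 0 < m -> high_mass m = mu0 * m / (mu0 * m + (qh - mu0)).
Proof. intros Hm. unfold high_mass, nuB. field. split; nra. Qed.

Lemma high_mass_le a m : 0 < m -> m <= a -> high_mass m <= high_mass a.
Proof.
  intros Hm Hma. pose proof (nuB_gt_mu0 a ltac:(lra)).
  unfold high_mass. apply Rmult_le_compat_l; [lra|]. apply Rinv_le_contravar; [lra|].
  unfold nuB. apply Rplus_le_compat_l, Rmult_le_compat_l; [lra|].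
  apply Rinv_le_contravar; lra.
Qed.

Lemma high_mass_rel_lipschitz a m : alpha_min mu0 qh <= m -> m <= a ->
  high_mass a - high_mass m <= high_mass m * (kappa * (a - m)).
Proof.
  intros Hm Hma. assert (Hm0 : 0 < m) by (pose proof alpha_min_pos; lra).
  unfold alpha_min in Hm. apply Rcomplements.Rle_div_l in Hm; [|lra].
  rewrite !high_mass_eq by lra. unfold kappa.
  set (d := qh - mu0) in *.
  assert (Hd : 0 < d) by (unfold d; lra).
  (* Both sides share the factor mu0 (a - m); the rest reduces to
     d^2 qh <= (m (1 - mu0)) ((mu0 a + d) (1 - mu0)). *)
  assert (Hkey : d * d * qh <= m * (1 - mu0) ^ 2 * (mu0 * a + d)).
  { assert (d <= a * (1 - mu0)) by nra.
    assert (d <= (mu0 * a + d) * (1 - mu0)) by nra.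
    replace (m * (1 - mu0) ^ 2 * (mu0 * a + d)) with ((m * (1 - mu0)) * ((mu0 * a + d) * (1 - mu0))) by ring.
    apply Rle_trans with (d * d); [nra|]. apply Rmult_le_compat; lra. }
  assert (E : mu0 * m / (mu0 * m + d) * ((1 - mu0) ^ 2 / (d * qh) * (a - m))
              - (mu0 * a / (mu0 * a + d) - mu0 * m / (mu0 * m + d))
            = mu0 * (a - m) * (m * (1 - mu0) ^ 2 * (mu0 * a + d) - d * d * qh)
              / ((mu0 * a + d) * (mu0 * m + d) * (d * qh)))
    by (field; repeat split; nra).
  enough (0 <= mu0 * (a - m) * (m * (1 - mu0) ^ 2 * (mu0 * a + d) - d * d * qh)
                / ((mu0 * a + d) * (mu0 * m + d) * (d * qh))) by lra.
  apply Rdiv_le_0_compat; [|repeat apply Rmult_lt_0_compat; nra].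
  apply Rmult_le_pos; nra.
Qed.

Lemma prob_act1_tau a m : 0 < a -> 0 < m ->
  prob_act1 mu0 qh a (tau mu0 qh m) = high_mass m * ind (acts mu0 qh a (nuB mu0 qh m)).
Proof. intros Ha Hm. unfold prob_act1, tau; simpl. rewrite acts_0 by exact Ha. unfold high_mass. simpl. ring. Qed.

Definition posteriors_valid (D : list (R * R)) : Prop :=
  List.Forall (fun wn => 0 <= fst wn /\ 0 <= snd wn <= 1) D.

Lemma prob_act1_le_mean a D : 0 < a -> posteriors_valid D ->
  prob_act1 mu0 qh a D <= fold_right Rplus 0 (map (fun wn => fst wn * snd wn) D) / nuB mu0 qh a.
Proof.
  intros Ha HD. pose proof (nuB_gt_mu0 a Ha) as Hn.
  unfold prob_act1, Rdiv. induction HD as [|[w nu] D [Hw Hnu] HD IH]; simpl in *; [lra|].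
  rewrite Rmult_plus_distr_r. apply Rplus_le_compat; [|exact IH].
  destruct (acts mu0 qh a nu) eqn:E; simpl.
  - pose proof (acts_ge_nuB a nu Ha E).
    assert (1 <= nu * / nuB mu0 qh a) by (apply Rcomplements.Rle_div_r; lra).
    rewrite Rmult_1_r, Rmult_assoc. rewrite <- (Rmult_1_r w) at 1.
    apply Rmult_le_compat_l; lra.
  - rewrite Rmult_0_r. apply Rmult_le_pos; [apply Rmult_le_pos; lra|].
    left; apply Rinv_0_lt_compat; lra.
Qed.

(* Below [alpha_min] the receiver would need a posterior above 1 to act. *)
Lemma prob_act1_nonpos a D : 0 < a -> a < alpha_min mu0 qh -> posteriors_valid D ->
  prob_act1 mu0 qh a D <= 0.
Proof.
  intros Ha Hlt HD. pose proof (nuB_gt1 a Ha Hlt).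
  unfold prob_act1. induction HD as [|[w nu] D [Hw Hnu] HD IH]; simpl in *; [lra|].
  destruct (acts mu0 qh a nu) eqn:E; simpl.
  - pose proof (acts_ge_nuB a nu Ha E). lra.
  - lra.
Qed.

Definition opt_bound (a : R) : R :=
  if Rle_dec (alpha_min mu0 qh) a then high_mass a else 0.

Lemma OPT_le_opt_bound a : 0 < a -> OPT mu0 qh a <= opt_bound a.
Proof.
  intros Ha. unfold OPT, opt_bound. destruct (Rle_dec _ _) as [Hle|Hlt].
  - apply real_Lub_Rbar_le; [left; apply high_mass_pos, Ha|].
    intros x [D [[HD [_ Hmean]] ->]].
    eapply Rle_trans; [apply prob_act1_le_mean; eassumption|].
    rewrite Hmean. unfold high_mass. lra.
  - apply real_Lub_Rbar_le; [lra|].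
    intros x [D [[HD _] ->]]. apply prob_act1_nonpos; [exact Ha|lra|exact HD].
Qed.

Section Learner.

Variable a : R.
Variable T : nat.
Hypothesis a_pos : 0 < a.
Hypothesis T_pos : (1 <= T)%nat.

(* Regret still to come in the current phase: the probes m, m + eps, ... below
   [a] lose at most kappa (a - m), kappa (a - m - eps), ..., which sums to at
   most kappa (a - m + eps)^2 / (2 eps). *)
Definition phase_potential (eps m : R) : R :=
  kappa * Rsqr (Rmax 0 (a - m + eps)) / (2 * eps).

(* Regret bound for all phases from one with step [e] on: each phase costs at
   most kappa + 1, and [depth T e + 1] bounds the number of phases left. *)
Definition restart_bound (e : R) : R :=
  kappa + (kappa + 1) * Rmax 0 (depth T e + 1).

(* The extra 1 pays for the round in which the receiver rejects. *)
Definition potential (s : se_state) : R :=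
  match s with
  | Exploit _ => kappa
  | Explore _ _ eps _ m => phase_potential eps m + 1 + restart_bound (eps * eps)
  end.

(* The squared length bound is [<= 2 e] rather than [<= e] so that it already
   holds for the initial interval [alpha_min, 1] with [e = 1/2]. *)
Definition phase_inv (lo hi e : R) : Prop :=
  alpha_min mu0 qh <= lo /\ a <= hi /\ (alpha_min mu0 qh <= a -> lo <= a) /\
  0 < e <= 1 / 2 /\ (hi - lo) ^ 2 <= 2 * e.

Definition state_inv (s : se_state) : Prop :=
  match s with
  | Exploit lo =>
      alpha_min mu0 qh <= lo /\ (alpha_min mu0 qh <= a -> lo <= a) /\ a - lo <= / INR T
  | Explore _ hi eps mprev m =>
      alpha_min mu0 qh <= mprev /\ m = mprev + eps /\ m <= hi /\ a <= hi /\
      (alpha_min mu0 qh <= a -> mprev <= a) /\ 0 < eps <= 1 / 2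
  end.

Lemma phase_potential_nonneg eps m : 0 < eps -> 0 <= phase_potential eps m.
Proof.
  intros Heps. pose proof kappa_pos. unfold phase_potential.
  apply Rdiv_le_0_compat; [apply Rmult_le_pos; [lra|apply Rle_0_sqr] | lra].
Qed.

Lemma phase_potential_step eps m : 0 < eps -> m <= a ->
  kappa * (a - m) <= phase_potential eps m - phase_potential eps (m + eps).
Proof.
  intros Heps Hma. pose proof kappa_pos. unfold phase_potential, Rsqr.
  rewrite !Rmax_right by lra.
  replace (a - (m + eps) + eps) with (a - m) by ring.
  enough (kappa * (a - m) + kappa * eps / 2
          = kappa * ((a - m + eps) * (a - m + eps)) / (2 * eps) - kappa * ((a - m) * (a - m)) / (2 * eps)).
  { pose proof (Rdiv_lt_0_compat (kappa * eps) 2 ltac:(nra) ltac:(lra)). lra. }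
  field. lra.
Qed.

Lemma kappa_le_restart_bound e : kappa <= restart_bound e.
Proof. pose proof kappa_pos. pose proof (Rmax_l 0 (depth T e + 1)). unfold restart_bound. nra. Qed.

Lemma restart_bound_sq e : 0 < e < 1 -> restart_bound (e * e) <= restart_bound e.
Proof.
  intros He. pose proof kappa_pos. unfold restart_bound. rewrite depth_sq by exact He.
  apply Rplus_le_compat_l, Rmult_le_compat_l; [lra|].
  apply Rle_max_compat_l. lra.
Qed.

Lemma potential_nonneg s : state_inv s -> 0 <= potential s.
Proof.
  pose proof kappa_pos. destruct s as [lo hi eps mprev m | lo]; simpl; [|lra].
  intros (_ & _ & _ & _ & _ & Heps).
  pose proof (phase_potential_nonneg eps m ltac:(lra)).
  pose proof (kappa_le_restart_bound (eps * eps)). lra.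
Qed.

Lemma phase_inv_depth_pos lo hi e : phase_inv lo hi e -> / INR T < hi - lo -> 0 < depth T e.
Proof.
  intros (_ & _ & _ & He & Hlen) Hlong. apply depth_pos; [exact T_pos|exact He|].
  assert (H1 : 1 <= INR T) by (apply (le_INR 1); exact T_pos).
  assert (Hsq : (/ INR T) ^ 2 < (hi - lo) ^ 2).
  { pose proof (Rinv_0_lt_compat (INR T) ltac:(lra)). simpl. nra. }
  rewrite Rinv_mult, <- pow_inv. pose proof (pow_lt (/ INR T) 2 ltac:(apply Rinv_0_lt_compat; lra)).
  lra.
Qed.

Lemma phase_open_spec lo hi e : phase_inv lo hi e -> / INR T < hi - lo -> lo + e <= hi ->
  state_inv (Explore lo hi e lo (lo + e)) /\ potential (Explore lo hi e lo (lo + e)) <= restart_bound e.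
Proof.
  intros Hinv Hlong Hfit. pose proof kappa_pos.
  pose proof (phase_inv_depth_pos lo hi e Hinv Hlong) as Hdepth.
  destruct Hinv as (Hlo & Hahi & Hloa & He & Hlen).
  split; [simpl; repeat split; lra|]. simpl potential.
  assert (Hstart : phase_potential e (lo + e) <= kappa).
  { unfold phase_potential. replace (a - (lo + e) + e) with (a - lo) by ring.
    apply Rcomplements.Rle_div_l; [lra|].
    enough (Rsqr (Rmax 0 (a - lo)) <= (hi - lo) ^ 2) by nra.
    rewrite <- Rsqr_pow2. apply Rsqr_incr_1; [apply Rmax_lub|apply Rmax_l|]; lra. }
  unfold restart_bound. rewrite depth_sq by lra.
  rewrite !Rmax_right by lra. nra.
Qed.

Lemma phase_start_spec f lo hi e : phase_inv lo hi e -> e ^ (2 ^ f) <= / INR T ->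
  state_inv (phase_start T (S f) lo hi e) /\ potential (phase_start T (S f) lo hi e) <= restart_bound e.
Proof.
  revert lo hi e. induction f as [|f IH]; intros lo hi e Hinv Hpow; rewrite phase_start_S.
  all: destruct (Rle_dec (hi - lo) (/ INR T)) as [Hshort|Hlong%Rnot_le_lt].
  1,3: destruct Hinv as (Hlo & Hahi & Hloa & He & Hlen);
       split; [simpl; repeat split; lra | apply kappa_le_restart_bound].
  all: destruct (Rle_dec (lo + e) hi) as [Hfit|Hover%Rnot_le_lt];
       [apply phase_open_spec; assumption|].
  all: destruct Hinv as (Hlo & Hahi & Hloa & He & Hlen).
  - simpl in Hpow. lra.
  - destruct (IH lo hi (e * e)) as [Hinv' Hpot'].
    + assert (0 < / INR T) by (apply Rinv_0_lt_compat, (lt_INR 0); lia).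
      repeat split; [exact Hlo|exact Hahi|exact Hloa|nra|nra|simpl; nra].
    + rewrite Rpow_mult_distr, <- pow_add.
      replace (2 ^ f + 2 ^ f)%nat with (2 ^ S f)%nat by (simpl; lia). exact Hpow.
    + split; [exact Hinv'|]. eapply Rle_trans; [exact Hpot'|]. apply restart_bound_sq. lra.
Qed.

Lemma restart_spec lo hi e : phase_inv lo hi e ->
  state_inv (phase_start T (S T) lo hi e) /\ potential (phase_start T (S T) lo hi e) <= restart_bound e.
Proof.
  intros Hinv. apply phase_start_spec; [exact Hinv|].
  destruct Hinv as (_ & _ & _ & He & _). apply pow_pow2_le_inv_INR; assumption.
Qed.

Lemma explore_drift lo hi eps mprev m :
  state_inv (Explore lo hi eps mprev m) ->
  let s' := se_next mu0 qh a T lo hi eps mprev m true in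
  state_inv s' /\
  opt_bound a - high_mass m * ind (acts mu0 qh a (nuB mu0 qh m)) + high_mass m * potential s'
    <= high_mass m * potential (Explore lo hi eps mprev m).
Proof.
  intros Hinv s'. pose proof kappa_pos. pose proof alpha_min_pos.
  destruct Hinv as (Hmprev & Hm & Hmhi & Hahi & Hprev_a & Heps).
  assert (Hm0 : 0 < m) by lra.
  pose proof (high_mass_pos m Hm0). pose proof (high_mass_le1 m Hm0).
  pose proof (phase_potential_nonneg eps m ltac:(lra)).
  pose proof (phase_potential_nonneg eps (m + eps) ltac:(lra)).
  unfold s'; cbn [se_next potential].
  destruct (acts mu0 qh a (nuB mu0 qh m)) eqn:Hacts; simpl ind.
  - apply acts_nuB in Hacts; [|exact a_pos|exact Hm0].
    assert (Hopt : opt_bound a = high_mass a)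
      by (unfold opt_bound; destruct (Rle_dec _ _); [reflexivity|lra]).
    assert (Hpaid : high_mass a - high_mass m
                    <= high_mass m * (phase_potential eps m - phase_potential eps (m + eps))).
    { eapply Rle_trans; [apply high_mass_rel_lipschitz; lra|].
      apply Rmult_le_compat_l; [lra|]. apply phase_potential_step; lra. }
    destruct (Rle_dec (m + eps) hi) as [Hnext|Hover%Rnot_le_lt].
    + split; [simpl; repeat split; intros; lra|]. simpl potential. rewrite Hopt. lra.
    + destruct (restart_spec m hi (eps * eps)) as [Hinv' Hpot'].
      { repeat split; intros; nra. }
      split; [exact Hinv'|]. rewrite Hopt.
      apply Rmult_le_compat_l with (r := high_mass m) in Hpot'; nra.
  - assert (Hlt : a < m).
    { apply Rnot_le_lt. intros Hle. apply (acts_nuB a m a_pos Hm0) in Hle. congruence. }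
    assert (Hopt : opt_bound a <= high_mass m).
    { unfold opt_bound. destruct (Rle_dec _ _); [apply high_mass_le|]; lra. }
    destruct (restart_spec mprev m (eps * eps)) as [Hinv' Hpot'].
    { repeat split; intros; nra. }
    split; [exact Hinv'|].
    apply Rmult_le_compat_l with (r := high_mass m) in Hpot'; nra.
Qed.

Lemma exploit_loss_le lo : state_inv (Exploit lo) ->
  opt_bound a - prob_act1 mu0 qh a (tau mu0 qh lo) <= kappa / INR T.
Proof.
  intros (Hlo & Hlo_a & Hclose). pose proof kappa_pos. pose proof alpha_min_pos.
  assert (H1 : 1 <= INR T) by (apply (le_INR 1); exact T_pos).
  rewrite prob_act1_tau by lra.
  pose proof (high_mass_pos lo ltac:(lra)). pose proof (high_mass_le1 lo ltac:(lra)).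
  unfold opt_bound. destruct (Rle_dec _ _) as [Hmin|Hmin].
  - specialize (Hlo_a Hmin).
    assert (Hacts : acts mu0 qh a (nuB mu0 qh lo) = true) by (apply acts_nuB; lra).
    rewrite Hacts. simpl ind. rewrite Rmult_1_r.
    eapply Rle_trans; [apply high_mass_rel_lipschitz; assumption|].
    assert (0 <= kappa * (a - lo)) by nra.
    apply Rle_trans with (kappa * (a - lo)); [nra|].
    unfold Rdiv. apply Rmult_le_compat_l; lra.
  - assert (0 <= kappa / INR T) by (apply Rdiv_le_0_compat; lra).
    destruct (acts mu0 qh a (nuB mu0 qh lo)); simpl ind; nra.
Qed.

Lemma regret_to_go_le_potential n s : (n <= T)%nat -> state_inv s ->
  INR n * opt_bound a - se_value mu0 qh a T n s <= potential s.
Proof.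
  revert s. induction n as [|n IH]; intros s Hn Hinv.
  { simpl. pose proof (potential_nonneg s Hinv). lra. }
  assert (IH' : forall s, state_inv s -> INR n * opt_bound a - se_value mu0 qh a T n s <= potential s)
    by (intros; apply IH; [lia|assumption]).
  destruct s as [lo hi eps mprev m | lo].
  - pose proof (explore_drift lo hi eps mprev m Hinv) as [Hinv' Hdrift]. cbv zeta in *.
    assert (Hm0 : 0 < m) by (destruct Hinv as (? & ? & _ & _ & _ & ?); pose proof alpha_min_pos; lra).
    pose proof (high_mass_pos m Hm0). pose proof (high_mass_le1 m Hm0).
    pose proof (IH' _ Hinv') as Hsignal. pose proof (IH' _ Hinv) as Hsilent.
    cbn [se_value]. change (mu0 / nuB mu0 qh m) with (high_mass m).
    change (se_next mu0 qh a T lo hi eps mprev m false) with (Explore lo hi eps mprev m).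
    rewrite prob_act1_tau, S_INR by lra.
    apply Rmult_le_compat_l with (r := high_mass m) in Hsignal; [|lra].
    apply Rmult_le_compat_l with (r := 1 - high_mass m) in Hsilent; [|lra].
    lra.
  - rewrite se_value_Exploit.
    pose proof (exploit_loss_le lo Hinv) as Hloss. simpl potential.
    assert (Hn' : INR (S n) <= INR T) by (apply le_INR; exact Hn).
    assert (0 < INR (S n)) by (apply (lt_INR 0); lia).
    apply Rmult_le_compat_l with (r := INR (S n)) in Hloss; [|lra].
    assert (INR (S n) * (kappa / INR T) <= kappa).
    { assert (H1 : 1 <= INR T) by (apply (le_INR 1); exact T_pos). pose proof kappa_pos.
      replace (INR (S n) * (kappa / INR T)) with (kappa * (INR (S n) / INR T)) by (field; lra).
      rewrite <- (Rmult_1_r kappa) at 2. apply Rmult_le_compat_l; [lra|].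
      apply Rcomplements.Rle_div_l; lra. }
    lra.
Qed.

End Learner.

End Instance.

Theorem proposition3p2 :
  exists K : R, 0 < K /\
    forall mu0 qh : R, 0 < mu0 -> mu0 < qh -> qh < 1 ->
    forall T : nat, (4 <= T)%nat ->
    forall astar : R, 0 < astar -> astar <= 1 ->
      regret_SE mu0 qh astar T
        <= K * (2 * (1 - mu0) ^ 2 / ((qh - mu0) * qh) + 1) * ln (ln (INR T)).
Proof.
  (* kappa + (kappa + 1) (6 + 2 u) <= 44 (2 kappa + 1) u once u >= 1/6 *)
  exists 44. split; [lra|].
  intros mu0 qh Hmu0 Hqh Hqh1 T HT a Ha Ha1.
  assert (HT1 : (1 <= T)%nat) by lia.
  assert (Hinit : phase_inv mu0 qh a (alpha_min mu0 qh) 1 (/ 2)).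
  { pose proof (alpha_min_pos mu0 qh Hqh Hqh1). pose proof (alpha_min_le1 mu0 qh Hqh Hqh1).
    repeat split; intros; nra. }
  destruct (restart_spec mu0 qh Hmu0 Hqh Hqh1 a T HT1 _ _ _ Hinit) as [Hinv Hpot].
  pose proof (regret_to_go_le_potential mu0 qh Hmu0 Hqh Hqh1 a T Ha HT1 T _ (Nat.le_refl T) Hinv) as Hregret.
  pose proof (OPT_le_opt_bound mu0 qh Hmu0 Hqh Hqh1 a Ha) as Hopt.
  pose proof (kappa_pos mu0 qh Hmu0 Hqh Hqh1) as Hkappa.
  pose proof (depth_half_le T HT) as Hdepth. pose proof (ln_ln_INR_ge T HT) as Hu.
  unfold regret_SE, se_init.
  replace (2 * (1 - mu0) ^ 2 / ((qh - mu0) * qh)) with (2 * kappa mu0 qh) by (unfold kappa, Rdiv; ring).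
  unfold restart_bound in Hpot. set (u := ln (ln (INR T))) in *.
  assert (Rmax 0 (depth T (/ 2) + 1) <= 6 + 2 * u) by (apply Rmax_lub; lra).
  assert (INR T * OPT mu0 qh a <= INR T * opt_bound mu0 qh a)
    by (apply Rmult_le_compat_l; [apply pos_INR|exact Hopt]).
  nra.
Qed.
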